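(* Let $M,K\ge 1$, let $\mathbf{H}=[\mathbf{h}_{:1},\dots,\mathbf{h}_{:K}]\in\mathbb{C}^{M\times K}$, let $P>0$, $N_0>0$, and let each user $k\in\{1,\dots,K\}$ have a rate $r_k\ge 0$. Let $\hat S\subseteq\{1,\dots,K\}$ and let $o\neq p$ be two users not in $\hat S$, with $C=\{o,p\}$. Suppose $$R_o^{\hat S}\ge r_o,\qquad R_p^{\hat S}\ge r_p,\qquad R_C^{\hat S}<r_o+r_p .$$ Then, given that the users in $\hat S$ are in outage, both $o$ and $p$ are in outage; that is, there is no set $S^*\subseteq\{1,\dots,K\}\setminus\hat S$ with $S^*\cap\{o,p\}\neq\emptyset$ such that for every $S\subseteq S^*$, $$\sum_{k\in S}r_k\le \log_2\det\!\Big(\mathbf{I}_M+\tfrac{P}{N_0}\mathbf{H}_{:S}\mathbf{H}_{:S}^{\mathrm H}\big(\mathbf{I}_M+\tfrac{P}{N_0}\mathbf{H}_{:\bar S}\mathbf{H}_{:\bar S}^{\mathrm H}\big)^{-1}\Big),\qquad \bar S=\{1,\dots,K\}\setminus S^* .$$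
   Context: For a set $A\subseteq\{1,\dots,K\}$, $\mathbf{H}_{:A}$ denotes the $M\times|A|$ submatrix of $\mathbf{H}$ with columns $\{\mathbf{h}_{:k}:k\in A\}$ (for $A=\emptyset$ the term $\mathbf{H}_{:A}\mathbf{H}_{:A}^{\mathrm H}$ is the zero matrix), and the superscript $\mathrm H$ is conjugate transpose. For sets $X,Y\subseteq\{1,\dots,K\}$, $R_X^{Y}=\log_2\det\big(\mathbf{I}_M+\frac{P}{N_0}\mathbf{H}_{:X}\mathbf{H}_{:X}^{\mathrm H}(\mathbf{I}_M+\frac{P}{N_0}\mathbf{H}_{:Y}\mathbf{H}_{:Y}^{\mathrm H})^{-1}\big)$ is the achievable (sum) rate of the users in $X$ under interference from the users in $Y$; for a single user $x$ write $R_x^Y=R_{\{x\}}^Y$. A set $S^*$ of users satisfying the displayed condition for all $S\subseteq S^*$ is a set of users that can all be successfully decoded (by successive and/or joint group decoding) at their rates while the remaining users $\{1,\dots,K\}\setminus S^*$ are treated as noise; a user belonging to no such set is said to be in outage. This models a Gaussian multiple-access channel $\mathbf{y}=\mathbf{H}\mathbf{x}+\mathbf{z}$ with $K$ single-antenna transmitters each of power $P$, an $M$-antenna receiver, and noise $\mathcal{CN}(0,N_0\mathbf{I}_M)$. *)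

From HB Require Import structures.
From mathcomp Require Import all_boot all_order all_algebra.
From mathcomp Require Import all_classical all_reals all_analysis.
From mathcomp Require Import complex.
Set Implicit Arguments. Unset Strict Implicit. Unset Printing Implicit Defensive.
Import Order.TTheory GRing.Theory Num.Theory.
Local Open Scope ring_scope.

Section Defs.
Variable R : realType.
Local Notation C := (R[i]).

Definition ctmx m n (A : 'M[C]_(m, n)) : 'M[C]_(n, m) := (map_mx Num.conj A)^T.

(* H_{:A} : the M x |A| submatrix of H with the columns indexed by A (in increasing order) *)
Definition colsub_set M K (H : 'M[C]_(M, K)) (A : {set 'I_K}) : 'M[C]_(M, #|A|) :=
  colsub (fun j : 'I_#|A| => @enum_val _ (mem A) j) H.

Definition gram M K (H : 'M[C]_(M, K)) (A : {set 'I_K}) : 'M[C]_M :=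
  colsub_set H A *m ctmx (colsub_set H A).

Definition log2 (x : R) : R := ln x / ln 2.

(* R_X^Y = log2 det (I + P/N0 H_X H_X^H (I + P/N0 H_Y H_Y^H)^{-1}).
   The determinant is a (positive) real number; we take its real part. *)
Definition rate M K (H : 'M[C]_(M, K)) (P N0 : R) (X Y : {set 'I_K}) : R :=
  let snr := ((P / N0)%:C)%C in
  log2 (complex.Re (\det (1%:M + snr *: gram H X *m invmx (1%:M + snr *: gram H Y)))).

End Defs.

From HB Require Import structures.
From mathcomp Require Import all_boot all_order all_algebra.
From mathcomp Require Import all_classical all_reals all_analysis.
From mathcomp Require Import complex ring.
Set Implicit Arguments. Unset Strict Implicit. Unset Printing Implicit Defensive.
Import Order.TTheory GRing.Theory Num.Theory.
Local Open Scope ring_scope.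

(* Write A_Y = I + (P/N0) H_Y H_Y^H, so that R_X^Y = log2 det A_(X u Y) - log2 det A_Y
   for disjoint X and Y.  Adding a user k to Y multiplies det A_Y by
   1 + (P/N0) h_k^H A_Y^-1 h_k (matrix determinant lemma), and by the Sherman-Morrison
   formula this factor can only shrink as Y grows.  Hence log det A is submodular: rates
   decrease when interference is added, and R_{o,p}^Y = R_p^Y + R_o^(Y u {p}).
   Let T be the complement of S*, which contains Shat.  If o and p both lie in S*, then
   r_o + r_p <= R_C^T <= R_C^Shat < r_o + r_p.  If only o does, then
   r_p + r_o <= R_p^Shat + R_o^T <= R_p^Shat + R_o^(Shat u {p}) = R_C^Shat < r_o + r_p. *)

Lemma setU1_ind (T : finType) (P : {set T} -> Prop) :
  P finset.set0 -> (forall (x : T) (A : {set T}), x \notin A -> P A -> P (x |: A)) ->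
  forall A, P A.
Proof.
move=> P0 PU1 A; have [m] := ubnP #|A|; elim: m A => // m IH A.
have [-> //|[x xA]] := set_0Vmem A.
rewrite (cardsD1 x) xA ltnS => cardA.
by rewrite -(finset.setD1K xA); apply: PU1 (IH _ cardA); rewrite finset.setD11.
Qed.

Section DiminishingReturns.
Variables (R : numDomainType) (T : finType) (f : {set T} -> R) (gain : {set T} -> T -> R).
Hypothesis fU1 : forall (A : {set T}) x, x \notin A -> f (x |: A) = f A + gain A x.
Hypothesis gain_antitone :
  forall (A B : {set T}) x, A \subset B -> x \notin B -> gain B x <= gain A x.

Lemma diminishing_returns (X Y Y' : {set T}) : Y \subset Y' -> [disjoint X & Y'] ->
  f (X :|: Y') - f Y' <= f (X :|: Y) - f Y.
Proof.
move=> YY'; elim/setU1_ind: X => [|x X xX IH]; first by rewrite !finset.set0U !subrr.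
move=> xX_Y'; have XY' : [disjoint X & Y'] := disjointWl (finset.subsetUr _ _) xX_Y'.
have xXY' : x \notin X :|: Y' by rewrite inE negb_or xX (disjointFr xX_Y') ?finset.setU11.
have xXY : x \notin X :|: Y by apply: contra xXY'; apply/fintype.subsetP/finset.setUS.
rewrite -!finset.setUA (fU1 xXY) (fU1 xXY') addrAC [leRHS]addrAC.
by apply: lerD (IH XY') (gain_antitone _ xXY'); apply: finset.setUS.
Qed.

End DiminishingReturns.

Lemma det_1_add_rank1 (F : comUnitRingType) n (u : 'cV[F]_n) (v : 'rV[F]_n) :
  \det (1%:M + u *m v) = 1 + (v *m u) 0 0.
Proof.
have E : block_mx (1%:M : 'M[F]_1) 0 u 1%:M *m block_mx 1%:M (- v) 0 (1%:M + u *m v)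
       = block_mx (1%:M + v *m u) (- v) 0 1%:M *m block_mx 1%:M 0 u 1%:M.
  rewrite !mulmx_block !mul1mx !mulmx1 !mul0mx !mulmx0 !addr0 !add0r.
  by rewrite mulmxN mulNmx (addrC 1%:M (u *m v)) addKr addrK.
move/(congr1 determinant): E.
rewrite !det_mulmx !det_lblock !det_ublock !det1 !mul1r !mulr1 => ->.
by rewrite det_mx11 !mxE eqxx.
Qed.

Section RankOneUpdate.
Variables (F : fieldType) (n : nat) (A : 'M[F]_n) (u : 'cV[F]_n) (v : 'rV[F]_n).
Hypothesis A_unit : A \in unitmx.

Lemma det_add_rank1 : \det (A + u *m v) = \det A * (1 + (v *m invmx A *m u) 0 0).
Proof.
have -> : A + u *m v = A *m (1%:M + (invmx A *m u) *m v).
  by rewrite mulmxDr mulmx1 !mulmxA mulmxV // mul1mx.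
by rewrite det_mulmx det_1_add_rank1 mulmxA.
Qed.

Lemma invmx_add_rank1 (c := 1 + (v *m invmx A *m u) 0 0) : c != 0 ->
  invmx (A + u *m v) = invmx A - c^-1 *: (invmx A *m u *m (v *m invmx A)).
Proof.
move=> c_neq0; set B := invmx A; set X := B - _.
have vBu : v *m B *m u = (c - 1)%:M by rewrite [LHS]mx11_scalar /c addrC addKr.
have : (A + u *m v) *m X = 1%:M.
  rewrite mulmxDl !mulmxBr -!scalemxAr !mulmxA !(mulmxV A_unit) mul1mx.
  have uvBuvB : u *m v *m B *m u *m v *m B = (c - 1) *: (u *m v *m B).
    by rewrite -(mulmxA u v) -(mulmxA u (v *m B)) vBu mul_mx_scalar -!scalemxAl mulmxA.
  have c1 : c^-1 * (c - 1) = 1 - c^-1 by field.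
  by rewrite uvBuvB scalerA c1 scalerBl scale1r opprB [Z in _ + Z]addrCA subrr addr0 subrK.
move=> E; have [AuV_unit _] := mulmx1_unit E.
by rewrite -[LHS]mulmx1 -E mulKmx.
Qed.
End RankOneUpdate.

Section ConjugateTranspose.
Variable R : realType.
Local Notation C := (R[i]).

Lemma ctmxM m n l (A : 'M[C]_(m, n)) (B : 'M[C]_(n, l)) :
  ctmx (A *m B) = ctmx B *m ctmx A.
Proof. by rewrite /ctmx map_mxM trmx_mul. Qed.

Lemma ctmxK m n (A : 'M[C]_(m, n)) : ctmx (ctmx A) = A.
Proof. by apply/matrixP=> i j; rewrite !mxE conjCK. Qed.

Lemma ctmxD m n (A B : 'M[C]_(m, n)) : ctmx (A + B) = ctmx A + ctmx B.
Proof. by rewrite /ctmx map_mxD linearD. Qed.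

Lemma ctmx_invmx n (A : 'M[C]_n) : ctmx (invmx A) = invmx (ctmx A).
Proof. by rewrite /ctmx map_invmx trmx_inv. Qed.

Lemma ctmxZ m n (a : C) (A : 'M[C]_(m, n)) : ctmx (a *: A) = Num.conj a *: ctmx A.
Proof. by rewrite /ctmx map_mxZ linearZ. Qed.

Lemma ctmx_sum n (I : finType) (P : pred I) (F : I -> 'M[C]_n) :
  ctmx (\sum_(i | P i) F i) = \sum_(i | P i) ctmx (F i).
Proof. by rewrite /ctmx raddf_sum linear_sum. Qed.

Lemma ctmx1 n : ctmx (1%:M : 'M[C]_n) = 1%:M.
Proof. by rewrite /ctmx map_mx1 trmx1. Qed.

Lemma ctmx_mulmx_ge0 n (x : 'cV[C]_n) : 0 <= (ctmx x *m x) 0 0.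
Proof. by rewrite mxE; apply: sumr_ge0 => i _; rewrite !mxE mulrC mulcJ_ge0. Qed.

End ConjugateTranspose.

Section ComplexRe.
Variable R : realType.
Implicit Types a b : R[i].

Lemma Re_gt0 a : 0 < a -> 0 < complex.Re a.
Proof. by rewrite ltcE => /andP[]. Qed.

Lemma ler_Re a b : a <= b -> complex.Re a <= complex.Re b.
Proof. by rewrite lecE => /andP[]. Qed.

Lemma ReM_ge0 a b : 0 <= a -> complex.Re (a * b) = complex.Re a * complex.Re b.
Proof. by case: a b => [a1 a2] [b1 b2] /ger0_Im /= ->; rewrite mul0r subr0. Qed.

Lemma ReV_ge0 a : 0 <= a -> complex.Re a^-1 = (complex.Re a)^-1.
Proof.
case: a => a1 a2 /ger0_Im /= ->.
have [->|a1_neq0] := eqVneq a1 0; first by rewrite invr0 mul0r.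
by rewrite expr0n /= addr0 expr2 invfM mulrA divff // mul1r.
Qed.

End ComplexRe.

Section InterferenceCovariance.
Variables (R : realType) (n K : nat) (g : 'I_K -> 'cV[R[i]]_n) (s : R[i]).
Hypothesis s_gt0 : 0 < s.
Implicit Types (X Y : {set 'I_K}) (j k : 'I_K).

Definition cov Y : 'M[R[i]]_n := 1%:M + s *: \sum_(k in Y) g k *m ctmx (g k).

Definition sinr Y k : R[i] := s * (ctmx (g k) *m invmx (cov Y) *m g k) 0 0.

Definition logdet Y : R := ln (complex.Re (\det (cov Y))).

Lemma cov_set0 : cov finset.set0 = 1%:M.
Proof. by rewrite /cov big_set0 scaler0 addr0. Qed.

Lemma covU X Y : [disjoint X & Y] ->
  cov (X :|: Y) = cov Y + s *: \sum_(k in X) g k *m ctmx (g k).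
Proof.
move=> XY; rewrite /cov -addrA -scalerDr -bigU; last by rewrite disjoint_sym.
by congr (_ + _ *: _); apply: eq_bigl => k; rewrite !inE orbC.
Qed.

Lemma covU1 Y k : k \notin Y -> cov (k |: Y) = cov Y + (s *: g k) *m ctmx (g k).
Proof. by move=> kY; rewrite covU ?disjoints1 // big_set1 scalemxAl. Qed.

Lemma ctmx_cov Y : ctmx (cov Y) = cov Y.
Proof.
rewrite /cov ctmxD ctmx1 ctmxZ ctmx_sum (geC0_conj (ltW s_gt0)).
by congr (_ + _ *: _); apply: eq_bigr => k _; rewrite ctmxM ctmxK.
Qed.

Lemma ctmx_invmx_cov Y : ctmx (invmx (cov Y)) = invmx (cov Y).
Proof. by rewrite ctmx_invmx ctmx_cov. Qed.

Lemma cov_quad_ge Y (y : 'cV_n) : (ctmx y *m y) 0 0 <= (ctmx y *m cov Y *m y) 0 0.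
Proof.
rewrite /cov mulmxDr mulmx1 mulmxDl -scalemxAr -scalemxAl [leRHS]mxE lerDl mxE.
rewrite mulmx_sumr mulmx_suml summxE; apply: mulr_ge0; first exact: ltW.
apply: sumr_ge0 => k _.
rewrite mulmxA -(mulmxA (ctmx y *m g k)).
by rewrite -[ctmx y *m g k]ctmxK ctmxM ctmxK ctmx_mulmx_ge0.
Qed.

Lemma sinr_ge0 Y k : cov Y \in unitmx -> 0 <= sinr Y k.
Proof.
move=> cov_unit; apply: mulr_ge0; first exact: ltW.
set y := invmx (cov Y) *m g k.
have -> : g k = cov Y *m y by rewrite mulKVmx.
rewrite ctmxM ctmx_cov -mulmxA mulKmx //.
exact: le_trans (ctmx_mulmx_ge0 y) (cov_quad_ge Y y).
Qed.

Lemma sinr_rank1 Y k : (ctmx (g k) *m invmx (cov Y) *m (s *: g k)) 0 0 = sinr Y k.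
Proof. by rewrite -scalemxAr mxE. Qed.

Lemma det_covU1 Y k : cov Y \in unitmx -> k \notin Y ->
  \det (cov (k |: Y)) = \det (cov Y) * (1 + sinr Y k).
Proof. by move=> cov_unit kY; rewrite covU1 // det_add_rank1 // sinr_rank1. Qed.

Lemma det_cov_gt0 Y : 0 < \det (cov Y).
Proof.
elim/setU1_ind: Y => [|k Y kY det_gt0]; first by rewrite cov_set0 det1 ltr01.
have cov_unit : cov Y \in unitmx by rewrite unitmxE unitfE gt_eqF.
by rewrite det_covU1 // mulr_gt0 // ltr_pwDl ?ltr01 // sinr_ge0.
Qed.

Lemma cov_unit Y : cov Y \in unitmx.
Proof. by rewrite unitmxE unitfE gt_eqF ?det_cov_gt0. Qed.

Lemma one_plus_sinr_gt0 Y k : 0 < 1 + sinr Y k.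
Proof. by rewrite ltr_pwDl ?ltr01 ?sinr_ge0 ?cov_unit. Qed.

Lemma sinrU1_le Y j k : j \notin Y -> sinr (j |: Y) k <= sinr Y k.
Proof.
move=> jY; have cov_unit := cov_unit Y.
have c_neq0 : 1 + sinr Y j != 0 by rewrite gt_eqF ?one_plus_sinr_gt0.
rewrite /sinr (covU1 jY) (invmx_add_rank1 cov_unit); last by rewrite (sinr_rank1 Y j).
rewrite (sinr_rank1 Y j).
apply: ler_wpM2l; first exact: ltW.
set B := invmx (cov Y).
rewrite mulmxBr mulmxBl [leLHS]mxE [X in _ + X]mxE gerBl.
rewrite -!(scalemxAr, scalemxAl) scalerA mxE; apply: mulr_ge0.
  by rewrite mulr_ge0 ?invr_ge0 ?ltW ?one_plus_sinr_gt0.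
have -> : ctmx (g k) *m (B *m g j *m (ctmx (g j) *m B)) *m g k
        = ctmx (ctmx (g j) *m B *m g k) *m (ctmx (g j) *m B *m g k).
  by rewrite !ctmxM ctmxK ctmx_invmx_cov !mulmxA.
exact: ctmx_mulmx_ge0.
Qed.

Lemma sinr_subset_le Y Y' k : Y \subset Y' -> sinr Y' k <= sinr Y k.
Proof.
move=> /finset.setUidPr <-; elim/setU1_ind: Y' => [|j D _ IH]; first by rewrite finset.setU0.
rewrite finset.setUCA; have [jYD|jYD] := boolP (j \in Y :|: D).
  by have /finset.setUidPr -> : [set j] \subset Y :|: D by rewrite finset.sub1set.
exact: le_trans (sinrU1_le k jYD) IH.
Qed.

Lemma logdetU1 Y k : k \notin Y ->
  logdet (k |: Y) = logdet Y + ln (complex.Re (1 + sinr Y k)).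
Proof.
move=> kY; rewrite /logdet (det_covU1 (cov_unit Y) kY) ReM_ge0 ?ltW ?det_cov_gt0 //.
by rewrite lnM // posrE Re_gt0 ?det_cov_gt0 ?one_plus_sinr_gt0.
Qed.

Lemma logdet_submodular X Y Y' : Y \subset Y' -> [disjoint X & Y'] ->
  logdet (X :|: Y') - logdet Y' <= logdet (X :|: Y) - logdet Y.
Proof.
apply: (diminishing_returns (gain := fun A k => ln (complex.Re (1 + sinr A k))) logdetU1).
move=> A B k AB _.
have gain_pos C : complex.Re (1 + sinr C k) \in Num.pos.
  by rewrite posrE Re_gt0 ?one_plus_sinr_gt0.
rewrite (ler_ln (gain_pos B) (gain_pos A)); apply: ler_Re.
by rewrite lerD2l sinr_subset_le.
Qed.

End InterferenceCovariance.

Lemma gram_sum (R : realType) M K (H : 'M[R[i]]_(M, K)) (A : {set 'I_K}) :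
  gram H A = \sum_(k in A) col k H *m ctmx (col k H).
Proof.
apply/matrixP=> i j; rewrite /gram summxE mxE.
rewrite (big_enum_val (A := mem A) (fun k => (col k H *m ctmx (col k H)) i j)) /=.
by apply: eq_bigr => l _; rewrite !mxE big_ord1 !mxE.
Qed.

Section Rate.
Variables (R : realType) (M K : nat) (H : 'M[R[i]]_(M, K)) (P N0 : R).
Hypotheses (P_gt0 : 0 < P) (N0_gt0 : 0 < N0).
Implicit Types (S X Y : {set 'I_K}) (a b : 'I_K).

Let snr : R[i] := ((P / N0)%:C)%C.

Let snr_gt0 : 0 < snr.
Proof. by rewrite ltcR divr_gt0. Qed.

Let g k : 'cV[R[i]]_M := col k H.
Let logdetH := logdet g snr.
Let covH := cov g snr.

Lemma rate_logdet X Y : [disjoint X & Y] ->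
  rate H P N0 X Y = (logdetH (X :|: Y) - logdetH Y) / ln 2.
Proof.
move=> XY; have covY_unit := cov_unit g snr_gt0 Y.
have det_pos Z : complex.Re (\det (covH Z)) \in Num.pos.
  by rewrite posrE Re_gt0 ?det_cov_gt0.
rewrite /rate /log2 /= -/snr.
have -> : 1%:M + snr *: gram H X *m invmx (1%:M + snr *: gram H Y)
          = covH (X :|: Y) *m invmx (covH Y).
  by rewrite /covH (covU _ _ XY) mulmxDl (mulmxV covY_unit) !gram_sum.
rewrite det_mulmx det_inv ReM_ge0 ?ReV_ge0 ?ltW ?det_cov_gt0 //.
by rewrite lnM ?lnV ?rpredV ?det_pos.
Qed.

Lemma rate_antitone X Y Y' : Y \subset Y' -> [disjoint X & Y'] ->
  rate H P N0 X Y' <= rate H P N0 X Y.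
Proof.
move=> YY' XY'; have XY : [disjoint X & Y] := disjointWr YY' XY'.
rewrite (rate_logdet XY) (rate_logdet XY'); apply: ler_wpM2r.
  by rewrite invr_ge0 ln_ge0 // ler1n.
exact: logdet_submodular.
Qed.

Lemma rate_pair a b S : a != b -> a \notin S -> b \notin S ->
  rate H P N0 [set a; b] S = rate H P N0 [set b] S + rate H P N0 [set a] (b |: S).
Proof.
move=> ab aS bS.
have abS : [disjoint [set a; b] & S]
  by rewrite finset.disjoints_subset finset.subUset !finset.sub1set !inE aS bS.
rewrite (rate_logdet abS) (rate_logdet _) ?disjoints1 // (rate_logdet _); last first.
  by rewrite disjoints1 !inE negb_or ab.
rewrite -finset.setUA.
(* [ring] stalls on the unfolded log-determinants, so abstract them first. *)
by move: (logdetH S) (logdetH (b |: S)) (logdetH (a |: (b |: S))) (ln 2) => x y z l; ring.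
Qed.

End Rate.

Unset Implicit Arguments. Set Strict Implicit.

Theorem lemmaV1 (R : realType) (M K : nat) (hM : (0 < M)%N) (hK : (0 < K)%N)
    (H : 'M[R[i]]_(M, K)) (P N0 : R) (hP : 0 < P) (hN0 : 0 < N0)
    (r : 'I_K -> R) (hr : forall k, 0 <= r k)
    (Shat : {set 'I_K}) (o p : 'I_K) (hop : o != p)
    (ho : o \notin Shat) (hp : p \notin Shat)
    (h1 : r o <= rate H P N0 [set o] Shat)
    (h2 : r p <= rate H P N0 [set p] Shat)
    (h3 : rate H P N0 [set o; p] Shat < r o + r p) :
  ~ exists Sstar : {set 'I_K},
      [/\ Sstar \subset ~: Shat,
          Sstar :&: [set o; p] != finset.set0 &
          forall S : {set 'I_K}, S \subset Sstar ->
            \sum_(k in S) r k <= rate H P N0 S (~: Sstar)].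
Proof.
case=> Sstar []; rewrite finset.subsetC => ShatC meet decoded.
have sum_le_rate (X Y : {set 'I_K}) : X \subset Sstar -> Y \subset ~: Sstar ->
    \sum_(k in X) r k <= rate H P N0 X Y.
  move=> XS YC; apply: le_trans (decoded X XS) _.
  by apply: (rate_antitone H hP hN0 YC); rewrite -finset.subsets_disjoint.
wlog oS : o p hop ho hp h1 h2 h3 meet / o \in Sstar.
  move=> main; have [|oS] := boolP (o \in Sstar); first exact: (main o p).
  apply: (main p o) => //; first by rewrite eq_sym.
  - by rewrite finset.setUC addrC.
  - by rewrite finset.setUC.
  case/finset.set0Pn: meet => x; rewrite !inE => /andP[xS /orP[/eqP xo|/eqP <- //]].
  by move: oS; rewrite -xo xS.
have [pS|pS] := boolP (p \in Sstar).
  have opS : [set o; p] \subset Sstar by rewrite finset.subUset !finset.sub1set oS pS.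
  have := sum_le_rate _ _ opS ShatC.
  by rewrite finset.big_setU1 ?inE // finset.big_set1 => /(lt_le_trans h3); rewrite ltxx.
have pShatC : p |: Shat \subset ~: Sstar by rewrite finset.subUset finset.sub1set inE pS ShatC.
have oS1 : [set o] \subset Sstar by rewrite finset.sub1set.
have := sum_le_rate _ _ oS1 pShatC; rewrite finset.big_set1 => ro_le.
have := lerD h2 ro_le; rewrite -(rate_pair H hP hN0 hop ho hp) addrC.
by move=> /(lt_le_trans h3); rewrite ltxx.
Qed.
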